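(* Let $n\ge2$ be an integer, $j$ a positive integer, $\lambda\in\mathbb{R}$ with $\lambda\ge\frac{(n-1)j}{2}$, $\alpha=1-\frac1n$, $\beta=\frac12(1-\frac1n)-\frac{\lambda}{jn}$, and assume $\alpha-\beta-1\le1$. Let $\mathcal{G}(z)=e^{jz^n/2}\mathcal{M}(\beta,\alpha,-jz^n)$ and $\mathcal{D}(z)=e^{jz^n/2}\mathcal{T}(\beta,\alpha,-jz^n)$. There is $C_n>0$ depending only on $n$ such that for all such $j,\lambda$ and all $z\ge1$, $$C_n^{-1}e^{-\frac{jz^n}{2}}(jz^n)^{\beta-\alpha}\le\mathcal{D}(z)\le C_ne^{-\frac{jz^n}{2}}(jz^n)^{\beta-\alpha},\qquad C_n^{-1}e^{\frac{jz^n}{2}}(jz^n)^{-\beta}\le\mathcal{G}(z)\le C_ne^{\frac{jz^n}{2}}(jz^n)^{-\beta}.$$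
   Context: $(x)_k=\prod_{m=1}^k(x+m-1)$, $(x)_0=1$. $\mathcal{M}(\beta,\alpha,y)=\sum_{k\ge0}\frac{(\beta)_k}{(\alpha)_k}\frac{y^k}{k!}$. For $y<0$, $\mathcal{T}(\beta,\alpha,y)=\frac{e^y}{\Gamma(\alpha-\beta)}\int_0^\infty e^{yt}t^{\alpha-\beta-1}(1+t)^{\beta-1}dt$. *)

From Stdlib Require Import Reals Factorial.
From Coquelicot Require Import Coquelicot.
Open Scope R_scope.

Fixpoint poch (x : R) (k : nat) : R :=
  match k with
  | O => 1
  | S k' => poch x k' * (x + INR k')
  end.

Definition kummerM (b a y : R) : R :=
  Series (fun k => poch b k / poch a k * (y ^ k / INR (fact k))).

Definition Gamma (s : R) : R :=
  RInt_gen (fun t => exp (- t) * Rpower t (s - 1))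
           (at_right 0) (Rbar_locally p_infty).

Definition tricomiT (b a y : R) : R :=
  exp y / Gamma (a - b) *
  RInt_gen (fun t => exp (y * t) * Rpower t (a - b - 1) * Rpower (1 + t) (b - 1))
           (at_right 0) (Rbar_locally p_infty).

(* Write [s = - beta >= 0] and [a = alpha - beta]; the hypotheses give [1/2 <= alpha],
   [s <= 3/2] and [a <= 2], so all the constants involved are absolute.

   Kummer's transformation [M(beta, alpha, -w) = e^(-w) M(alpha + s, alpha, w)] turns [G] into a
   series with positive terms [(alpha + s)_k / (alpha)_k * w^k / k!]. The Pochhammer ratio is
   comparable to [(k + 1)^s], and the weights [w^k / k!] concentrate at [k ~ w] with relative
   variance [O(1/w)], so the series is comparable to [w^s e^w].

   For [D], the integral [int_0^oo e^(-w t) t^(a-1) (1 + t)^(beta-1) dt] is comparable to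
   [w^(-a)]: on [(0, 1/w]] the integrand is comparable to [t^(a-1)], and beyond [1/w] it is
   dominated by [w^(1-a) e^(-w t / 2)]. [Gamma(a)] is the case [w = 1], hence bounded above and
   below. *)

From Stdlib Require Import Reals Lra Lia Psatz Factorial.
From Coquelicot Require Import Coquelicot.
Open Scope R_scope.

Lemma exp_le_compat x y : x <= y -> exp x <= exp y.
Proof. intros [H| ->]; [left; apply exp_increasing|]; lra. Qed.

Lemma Rpower_pos x s : 0 < Rpower x s.
Proof. apply exp_pos. Qed.

Lemma Rpower_1_l s : Rpower 1 s = 1.
Proof. unfold Rpower. rewrite ln_1, Rmult_0_r. apply exp_0. Qed.

Lemma Rpower_le_pow x s (n : nat) : 1 <= x -> 0 <= s <= INR n -> Rpower x s <= x ^ n.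
Proof. intros Hx Hs. rewrite <- Rpower_pow by lra. apply Rle_Rpower; lra. Qed.

Lemma Rpower_le_1 x c : 1 <= x -> c <= 0 -> Rpower x c <= 1.
Proof. intros Hx Hc. rewrite <- (Rpower_O x) by lra. apply Rle_Rpower; lra. Qed.

Lemma Rpower_Rinv_l x s : 0 < x -> Rpower (/ x) s = Rpower x (- s).
Proof. intro Hx. unfold Rpower. rewrite ln_Rinv by exact Hx. f_equal. ring. Qed.

Lemma ln_le_sub_1 y : 0 < y -> ln y <= y - 1.
Proof. intro Hy. pose proof (exp_ineq1_le (ln y)). rewrite exp_ln in H; lra. Qed.

Lemma is_series_ext_R (a b : nat -> R) (la lb : R) :
  (forall n, a n = b n) -> la = lb -> is_series a la -> is_series b lb.
Proof. intros Hab <-. apply is_series_ext, Hab. Qed.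

Lemma ex_series_ext_R (a b : nat -> R) :
  (forall n, a n = b n) -> ex_series a -> ex_series b.
Proof. apply ex_series_ext. Qed.

Lemma is_series_lincomb (a b : nat -> R) (la lb u v : R) :
  is_series a la -> is_series b lb -> is_series (fun k => u * a k + v * b k) (u * la + v * lb).
Proof.
  intros Ha Hb. exact (is_series_plus _ _ _ _ (is_series_scal_l u _ _ Ha) (is_series_scal_l v _ _ Hb)).
Qed.

Lemma is_series_le (a b : nat -> R) (la lb : R) :
  (forall n, a n <= b n) -> is_series a la -> is_series b lb -> la <= lb.
Proof.
  intros Hab Ha Hb. apply (is_lim_seq_le (sum_n a) (sum_n b) la lb); [|exact Ha|exact Hb].
  induction n as [|n IH]; [rewrite !sum_O; apply Hab|].
  rewrite !sum_Sn. pose proof (Hab (S n)). unfold plus; simpl. lra.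
Qed.

Lemma is_series_exp w : is_series (fun k => w ^ k / INR (fact k)) (exp w).
Proof.
  eapply is_series_ext_R; [|reflexivity|exact (is_exp_Reals w)].
  intro k. rewrite pow_n_pow. reflexivity.
Qed.

(* [k w^k / k! = w * w^(k-1) / (k-1)!]. *)
Lemma is_series_exp_mul_index (f : nat -> R) w l :
  is_series (fun k => f (S k) * (w ^ k / INR (fact k))) l ->
  is_series (fun k => INR k * f k * (w ^ k / INR (fact k))) (w * l).
Proof.
  intro Hl. apply is_series_decr_1.
  eapply is_series_ext_R; [| |exact (is_series_scal_l w _ _ Hl)].
  - intro k. change (w * (f (S k) * (w ^ k / INR (fact k)))
      = INR (S k) * f (S k) * (w ^ S k / INR (fact (S k)))).
    rewrite fact_simpl, mult_INR. simpl pow.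
    pose proof (INR_fact_lt_0 k). assert (INR (S k) <> 0) by (apply not_0_INR; lia).
    field. lra.
  - change (w * l = w * l + - (INR 0 * f O * (w ^ 0 / INR (fact 0)))). simpl. ring.
Qed.

Lemma is_series_exp_S w : is_series (fun k => (INR k + 1) * (w ^ k / INR (fact k))) ((w + 1) * exp w).
Proof.
  assert (H1 : is_series (fun k => 1 * (w ^ k / INR (fact k))) (exp w)).
  { eapply is_series_ext_R; [|reflexivity|apply is_series_exp]. intro k. cbv beta. ring. }
  eapply is_series_ext_R; [| |exact (is_series_lincomb _ _ _ _ 1 1
    (is_series_exp_mul_index (fun _ => 1) w _ H1) (is_series_exp w))]; intros; cbv beta; ring.
Qed.

Lemma is_series_exp_S2 w :
  is_series (fun k => (INR k + 1) ^ 2 * (w ^ k / INR (fact k))) ((w ^ 2 + 3 * w + 1) * exp w).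
Proof.
  assert (H1 : is_series (fun k => INR (S k) * (w ^ k / INR (fact k))) ((w + 1) * exp w)).
  { eapply is_series_ext_R; [|reflexivity|apply is_series_exp_S]. intro k. rewrite S_INR. ring. }
  pose proof (is_series_lincomb _ _ _ _ 1 2 (is_series_exp_mul_index INR w _ H1)
    (is_series_exp_S w)) as H2.
  eapply is_series_ext_R; [| |exact (is_series_lincomb _ _ _ _ 1 (-1) H2 (is_series_exp w))];
    intros; cbv beta; ring.
Qed.

Lemma is_series_exp_sq_dev w : -1 < w ->
  is_series (fun k => ((INR k + 1) / (w + 1) - 1) ^ 2 * (w ^ k / INR (fact k)))
    (w / (w + 1) ^ 2 * exp w).
Proof.
  intro Hw.
  pose proof (is_series_lincomb _ _ _ _ (/ (w + 1) ^ 2) (- 2 / (w + 1))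
    (is_series_exp_S2 w) (is_series_exp_S w)) as H.
  eapply is_series_ext_R; [| |exact (is_series_lincomb _ _ _ _ 1 1 H (is_series_exp w))].
  - intro k. cbv beta. field. split; [apply INR_fact_neq_0|lra].
  - field. lra.
Qed.

(** * Kummer's transformation *)

Lemma poch_S_l x k : poch x (S k) = x * poch (x + 1) k.
Proof.
  induction k as [|k IH]; [simpl; ring|].
  change (poch x (S (S k)) = x * (poch (x + 1) k * (x + 1 + INR k))).
  change (poch x (S (S k))) with (poch x (S k) * (x + INR (S k))).
  rewrite IH, S_INR. ring.
Qed.

Lemma poch_pos x k : 0 < x -> 0 < poch x k.
Proof.
  intro Hx. induction k as [|k IH]; simpl; [lra|].
  pose proof (pos_INR k). apply Rmult_lt_0_compat; lra.
Qed.

Definition poch_ratio (a c : R) (k : nat) : R := poch a k / poch c k.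

Lemma poch_ratio_S a c k : 0 < c ->
  poch_ratio a c (S k) = poch_ratio a c k * (1 + (a - c) / (c + INR k)).
Proof.
  intro Hc. unfold poch_ratio. simpl.
  pose proof (poch_pos c k Hc). pose proof (pos_INR k). field. lra.
Qed.

Lemma poch_ratio_pos a c k : 0 < a -> 0 < c -> 0 < poch_ratio a c k.
Proof. intros. apply Rdiv_lt_0_compat; apply poch_pos; assumption. Qed.

(* [M(a, c, - x) = \sum_j kummer_alt_coef a c j * x ^ j]. *)
Definition kummer_alt_coef (a c : R) (j : nat) : R :=
  (-1) ^ j * poch_ratio a c j / INR (fact j).

Lemma kummer_alt_coef_S a c j : 0 < c ->
  kummer_alt_coef a c (S j) * INR (S j) = - (a / c) * kummer_alt_coef (a + 1) (c + 1) j.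
Proof.
  intro Hc. unfold kummer_alt_coef, poch_ratio. rewrite !poch_S_l, fact_simpl, mult_INR.
  pose proof (poch_pos (c + 1) j ltac:(lra)). pose proof (INR_fact_lt_0 j).
  assert (INR (S j) <> 0) by (apply not_0_INR; lia).
  simpl pow. field. repeat split; lra.
Qed.

Lemma PS_mult_kummer_exp_S m a c : 0 < c ->
  PS_mult (kummer_alt_coef a c) (fun k => / INR (fact k)) (S m) * INR (S m)
  = PS_mult (kummer_alt_coef a c) (fun k => / INR (fact k)) m
    - a / c * PS_mult (kummer_alt_coef (a + 1) (c + 1)) (fun k => / INR (fact k)) m.
Proof.
  intro Hc. unfold PS_mult. set (q := kummer_alt_coef a c).
  rewrite Rmult_comm, scal_sum.
  transitivity (sum_f_R0 (fun j => q j * INR (S m - j) / INR (fact (S m - j))) (S m)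
              + sum_f_R0 (fun j => q j * INR j / INR (fact (S m - j))) (S m)).
  { rewrite <- plus_sum. apply sum_eq. intros i Hi.
    rewrite minus_INR, S_INR by lia. pose proof (INR_fact_lt_0 (S m - i)). field. lra. }
  assert (Hleft : sum_f_R0 (fun j => q j * INR (S m - j) / INR (fact (S m - j))) (S m)
                  = sum_f_R0 (fun j => q j * / INR (fact (m - j))) m).
  { rewrite tech5, Nat.sub_diag, Rmult_0_r. unfold Rdiv at 2. rewrite Rmult_0_l, Rplus_0_r.
    apply sum_eq. intros i Hi.
    replace (S m - i)%nat with (S (m - i)) by lia. rewrite fact_simpl, mult_INR.
    pose proof (INR_fact_lt_0 (m - i)).
    assert (INR (S (m - i)) <> 0) by (apply not_0_INR; lia). field. lra. }
  assert (Hright : sum_f_R0 (fun j => q j * INR j / INR (fact (S m - j))) (S m)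
      = - (a / c) * sum_f_R0 (fun j => kummer_alt_coef (a + 1) (c + 1) j * / INR (fact (m - j))) m).
  { rewrite decomp_sum by lia. simpl pred. rewrite Rmult_0_r.
    unfold Rdiv at 1. rewrite Rmult_0_l, Rplus_0_l, scal_sum.
    apply sum_eq. intros i Hi.
    replace (S m - S i)%nat with (m - i)%nat by lia.
    unfold q. rewrite kummer_alt_coef_S by lra. field. split; [lra|apply INR_fact_neq_0]. }
  rewrite Hleft, Hright. unfold Rminus. ring.
Qed.

(* Chu--Vandermonde: the Cauchy product of [M(a, c, - x)] and [e^x] has the coefficients of
   [M(c - a, c, x)]. *)
Lemma PS_mult_kummer_exp m : forall a c, 0 < c ->
  PS_mult (kummer_alt_coef a c) (fun k => / INR (fact k)) m
  = poch_ratio (c - a) c m / INR (fact m).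
Proof.
  induction m as [|m IH]; intros a c Hc.
  { unfold PS_mult, kummer_alt_coef, poch_ratio. simpl. field. }
  pose proof (PS_mult_kummer_exp_S m a c Hc) as Hrec.
  rewrite !IH in Hrec by lra.
  replace (c + 1 - (a + 1)) with (c - a) in Hrec by ring.
  assert (INR (S m) <> 0) by (apply not_0_INR; lia).
  apply (Rmult_eq_reg_r (INR (S m))); [rewrite Hrec|assumption].
  unfold poch_ratio.
  assert (Hshift : poch (c + 1) m = poch c m * (c + INR m) / c).
  { pose proof (poch_S_l c m) as E. simpl in E. rewrite E. field. lra. }
  rewrite Hshift.
  change (poch (c - a) (S m)) with (poch (c - a) m * (c - a + INR m)).
  change (poch c (S m)) with (poch c m * (c + INR m)).
  rewrite fact_simpl, mult_INR, S_INR.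
  pose proof (poch_pos c m Hc). pose proof (INR_fact_lt_0 m). pose proof (pos_INR m).
  field. repeat split; lra.
Qed.

Lemma kummer_transformation (b c w L : R) : 0 < c ->
  ex_series (fun k => Rabs (poch_ratio (c - b) c k) * (Rabs w ^ k / INR (fact k))) ->
  is_series (fun k => poch_ratio (c - b) c k * (w ^ k / INR (fact k))) L ->
  is_series (fun k => poch b k / poch c k * ((- w) ^ k / INR (fact k))) (exp (- w) * L).
Proof.
  intros Hc Habs HL.
  set (q := kummer_alt_coef (c - b) c).
  assert (Hq : is_series (fun k => q k * (- w) ^ k) L).
  { eapply is_series_ext_R; [|reflexivity|exact HL]. intro k. unfold q, kummer_alt_coef.
    assert (Hsign : (-1) ^ k * (-1) ^ k = 1).
    { rewrite <- Rpow_mult_distr. replace (-1 * -1) with 1 by ring. apply pow1. }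
    replace ((- w) ^ k) with ((-1) ^ k * w ^ k) by (rewrite <- Rpow_mult_distr; f_equal; ring).
    transitivity (poch_ratio (c - b) c k * (w ^ k / INR (fact k)) * ((-1) ^ k * (-1) ^ k));
      [rewrite Hsign|unfold Rdiv]; ring. }
  assert (Hqabs : ex_series (fun k => Rabs (q k * (- w) ^ k))).
  { eapply ex_series_ext_R; [|exact Habs]. intro k. unfold q, kummer_alt_coef, Rdiv.
    rewrite !Rabs_mult, pow_1_abs, Rabs_inv, <- RPow_abs, Rabs_Ropp.
    rewrite (Rabs_right (INR (fact k))) by (left; apply INR_fact_lt_0). ring. }
  assert (He : is_series (fun k => (- w) ^ k / INR (fact k)) (exp (- w))) by apply is_series_exp.
  assert (Heabs : ex_series (fun k => Rabs ((- w) ^ k / INR (fact k)))).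
  { exists (exp (Rabs w)). eapply is_series_ext_R; [|reflexivity|apply is_series_exp]. intro k.
    unfold Rdiv. rewrite Rabs_mult, Rabs_inv, <- RPow_abs, Rabs_Ropp.
    rewrite (Rabs_right (INR (fact k))) by (left; apply INR_fact_lt_0). reflexivity. }
  pose proof (is_series_mult _ _ _ _ Hq He Hqabs Heabs) as Hprod.
  rewrite Rmult_comm. eapply is_series_ext_R; [|reflexivity|exact Hprod]. intro m.
  transitivity ((- w) ^ m * PS_mult q (fun k => / INR (fact k)) m).
  { unfold PS_mult. rewrite scal_sum. apply sum_eq. intros k Hk.
    replace ((- w) ^ m) with ((- w) ^ k * (- w) ^ (m - k)) by (rewrite <- pow_add; f_equal; lia).
    unfold Rdiv. ring. }
  unfold q. rewrite PS_mult_kummer_exp by exact Hc.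
  replace (c - (c - b)) with b by ring. unfold poch_ratio. unfold Rdiv. ring.
Qed.

(** * Size of [M(c + s, c, w)] *)

Lemma one_plus_div_le_Rpower x s : 1 < x -> 0 <= s -> 1 + s / x <= Rpower (x / (x - 1)) s.
Proof.
  intros Hx Hs. eapply Rle_trans; [apply exp_ineq1_le|]. apply exp_le_compat.
  assert (Hln : 1 / x <= ln (x / (x - 1))).
  { pose proof (ln_le_sub_1 ((x - 1) / x) ltac:(apply Rdiv_lt_0_compat; lra)).
    rewrite ln_div in * by lra.
    assert ((x - 1) / x - 1 = - (1 / x)) by (field; lra). lra. }
  replace (s / x) with (s * (1 / x)) by (field; lra).
  apply Rmult_le_compat_l; lra.
Qed.

Lemma Rpower_le_one_plus_div x s : 0 < x -> 0 <= s -> Rpower ((x + s + 1) / (x + s)) s <= 1 + s / x.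
Proof.
  intros Hx Hs.
  assert (Hup : ln ((x + s + 1) / (x + s)) <= 1 / (x + s)).
  { pose proof (ln_le_sub_1 ((x + s + 1) / (x + s)) ltac:(apply Rdiv_lt_0_compat; lra)).
    assert ((x + s + 1) / (x + s) - 1 = 1 / (x + s)) by (field; lra). lra. }
  assert (Hlow : s / (x + s) <= ln (1 + s / x)).
  { replace (1 + s / x) with (/ (x / (x + s))) by (field; lra).
    rewrite ln_Rinv by (apply Rdiv_lt_0_compat; lra).
    pose proof (ln_le_sub_1 (x / (x + s)) ltac:(apply Rdiv_lt_0_compat; lra)).
    assert (x / (x + s) - 1 = - (s / (x + s))) by (field; lra). lra. }
  assert (0 <= s / x) by (apply Rdiv_le_0_compat; lra).
  rewrite <- (exp_ln (1 + s / x)) by lra. apply exp_le_compat.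
  eapply Rle_trans; [|exact Hlow].
  replace (s / (x + s)) with (s * (1 / (x + s))) by (field; lra).
  apply Rmult_le_compat_l; lra.
Qed.

Lemma poch_ratio_S_le c s k : 0 < c -> 0 <= s ->
  poch_ratio (c + s) c (S k) <= (1 + s / c) * Rpower ((c + INR k) / c) s.
Proof.
  intros Hc Hs. induction k as [|k IH].
  { rewrite poch_ratio_S by exact Hc. unfold poch_ratio. simpl.
    replace ((c + 0) / c) with 1 by (field; lra). rewrite Rpower_1_l.
    replace (c + s - c) with s by ring. rewrite Rplus_0_r. lra. }
  rewrite poch_ratio_S by exact Hc. replace (c + s - c) with s by ring.
  pose proof (pos_INR k). rewrite S_INR in *.
  pose proof (one_plus_div_le_Rpower (c + (INR k + 1)) s ltac:(lra) Hs) as Hstep.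
  replace (c + (INR k + 1) - 1) with (c + INR k) in Hstep by ring.
  replace ((c + (INR k + 1)) / c) with ((c + INR k) / c * ((c + (INR k + 1)) / (c + INR k)))
    by (field; lra).
  rewrite <- Rpower_mult_distr by (apply Rdiv_lt_0_compat; lra).
  assert (0 <= s / (c + (INR k + 1))) by (apply Rdiv_le_0_compat; lra).
  pose proof (poch_ratio_pos (c + s) c (S k) ltac:(lra) Hc).
  rewrite <- Rmult_assoc. apply Rmult_le_compat; lra.
Qed.

Lemma poch_ratio_ge c s k : 0 < c -> 0 <= s ->
  Rpower ((c + s + INR k) / (c + s)) s <= poch_ratio (c + s) c k.
Proof.
  intros Hc Hs. induction k as [|k IH].
  { unfold poch_ratio. simpl. replace ((c + s + 0) / (c + s)) with 1 by (field; lra).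
    rewrite Rpower_1_l. lra. }
  rewrite poch_ratio_S by exact Hc. replace (c + s - c) with s by ring.
  pose proof (pos_INR k). rewrite S_INR.
  pose proof (Rpower_le_one_plus_div (c + INR k) s ltac:(lra) Hs) as Hstep.
  replace ((c + s + (INR k + 1)) / (c + s))
    with ((c + s + INR k) / (c + s) * ((c + INR k + s + 1) / (c + INR k + s))) by (field; lra).
  rewrite <- Rpower_mult_distr by (apply Rdiv_lt_0_compat; lra).
  apply Rmult_le_compat; auto; left; apply Rpower_pos.
Qed.

Lemma poch_ratio_upper c s k : / 2 <= c -> 0 <= s <= 3 / 2 ->
  poch_ratio (c + s) c k <= 16 * Rpower (INR k + 1) s.
Proof.
  intros Hc Hs. pose proof (Rpower_pos (INR k + 1) s).
  destruct k as [|k].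
  { unfold poch_ratio. simpl. rewrite Rplus_0_l, Rpower_1_l. lra. }
  eapply Rle_trans; [apply poch_ratio_S_le; lra|].
  pose proof (pos_INR k). rewrite S_INR.
  assert (Hfirst : 0 <= 1 + s / c <= 4).
  { assert (s / c <= 3) by (apply Rle_div_l; lra).
    assert (0 <= s / c) by (apply Rdiv_le_0_compat; lra). lra. }
  assert (Hsecond : Rpower ((c + INR k) / c) s <= 4 * Rpower (INR k + 1 + 1) s).
  { apply Rle_trans with (Rpower (2 * (INR k + 1 + 1)) s).
    - apply Rle_Rpower_l; [lra|]. split; [apply Rdiv_lt_0_compat; lra|].
      apply Rle_div_l; [lra|nra].
    - rewrite <- Rpower_mult_distr by lra. apply Rmult_le_compat_r; [left; apply Rpower_pos|].
      pose proof (Rpower_le_pow 2 s 2 ltac:(lra) ltac:(simpl; lra)). lra. }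
  pose proof (Rpower_pos ((c + INR k) / c) s). nra.
Qed.

Lemma poch_ratio_lower c s k : 0 < c -> 0 <= s -> c + s <= 2 ->
  Rpower (INR k + 1) s / 4 <= poch_ratio (c + s) c k.
Proof.
  intros Hc Hs Hcs. eapply Rle_trans; [|apply poch_ratio_ge; lra].
  pose proof (pos_INR k).
  replace (INR k + 1) with (2 * ((INR k + 1) / 2)) by field.
  rewrite <- Rpower_mult_distr by lra.
  assert (Hbase : Rpower ((INR k + 1) / 2) s <= Rpower ((c + s + INR k) / (c + s)) s).
  { apply Rle_Rpower_l; [lra|]. split; [lra|].
    apply Rmult_le_reg_r with (2 * (c + s)); [lra|].
    replace ((c + s + INR k) / (c + s) * (2 * (c + s))) with (2 * (c + s + INR k)) by (field; lra).
    nra. }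
  pose proof (Rpower_le_pow 2 s 2 ltac:(lra) ltac:(simpl; lra)).
  pose proof (Rpower_pos ((INR k + 1) / 2) s). simpl in *. nra.
Qed.

Lemma Rpower_le_1_plus_sq x s : 0 < x -> 0 <= s <= 2 -> Rpower x s <= 1 + x ^ 2.
Proof.
  intros Hx Hs. pose proof (pow2_ge_0 x). destruct (Rle_lt_dec x 1) as [Hx1|Hx1].
  - assert (Rpower x s <= Rpower 1 s) by (apply Rle_Rpower_l; lra).
    rewrite Rpower_1_l in *. lra.
  - pose proof (Rpower_le_pow x s 2 ltac:(lra) ltac:(simpl; lra)). lra.
Qed.

Lemma Rpower_ge_sq_dev x s : 0 < x -> 0 <= s <= 2 -> (1 - 16 / 9 * (x - 1) ^ 2) / 16 <= Rpower x s.
Proof.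
  intros Hx Hs. pose proof (Rpower_pos x s). pose proof (pow2_ge_0 (x - 1)).
  destruct (Rle_lt_dec (/ 4) x) as [Hx4|Hx4]; [|nra].
  assert (H1 : Rpower 1 s <= Rpower (4 * x) s) by (apply Rle_Rpower_l; lra).
  rewrite Rpower_1_l, <- Rpower_mult_distr in H1 by lra.
  pose proof (Rpower_le_pow 4 s 2 ltac:(lra) ltac:(simpl; lra)). simpl in *. nra.
Qed.

(* The weights [w^k / k!] concentrate at [k ~ w], so [(k + 1)^s] may be replaced by [(w + 1)^s];
   the second moment [is_series_exp_sq_dev] controls the error. *)
Lemma kummer_series_lower c s w L : 0 < c -> 0 <= s -> c + s <= 2 -> 0 < w ->
  is_series (fun k => poch_ratio (c + s) c k * (w ^ k / INR (fact k))) L ->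
  / 120 * Rpower w s * exp w <= L.
Proof.
  intros Hc Hs Hcs Hw HL. set (P := Rpower (w + 1) s).
  assert (Hterm : forall k,
    P / 64 * ((1 - 16 / 9 * ((INR k + 1) / (w + 1) - 1) ^ 2) * (w ^ k / INR (fact k)))
                            <= poch_ratio (c + s) c k * (w ^ k / INR (fact k))).
  { intro k. pose proof (pos_INR k).
    assert (He : 0 <= w ^ k / INR (fact k))
      by (apply Rdiv_le_0_compat; [apply pow_le; lra|apply INR_fact_lt_0]).
    rewrite <- Rmult_assoc. apply Rmult_le_compat_r; [exact He|].
    eapply Rle_trans; [|apply poch_ratio_lower; lra].
    replace (INR k + 1) with ((w + 1) * ((INR k + 1) / (w + 1))) at 2 by (field; lra).
    rewrite <- Rpower_mult_distr by (try apply Rdiv_lt_0_compat; lra). fold P.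
    pose proof (Rpower_ge_sq_dev ((INR k + 1) / (w + 1)) s
      ltac:(apply Rdiv_lt_0_compat; lra) ltac:(lra)).
    assert (0 < P) by apply Rpower_pos. nra. }
  assert (Hsum : is_series
    (fun k => P / 64 * ((1 - 16 / 9 * ((INR k + 1) / (w + 1) - 1) ^ 2) * (w ^ k / INR (fact k))))
    (P / 64 * (1 - 16 / 9 * (w / (w + 1) ^ 2)) * exp w)).
  { eapply is_series_ext_R; [| |exact (is_series_lincomb _ _ _ _ (P / 64) (- (P / 64 * (16 / 9)))
      (is_series_exp w) (is_series_exp_sq_dev w ltac:(lra)))]; intros; cbv beta; ring. }
  pose proof (is_series_le _ _ _ _ Hterm Hsum HL) as Hle.
  assert (Hq : w / (w + 1) ^ 2 <= / 4).
  { pose proof (pow2_ge_0 (w - 1)). apply Rle_div_l; nra. }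
  assert (HP : Rpower w s <= P) by (apply Rle_Rpower_l; lra).
  pose proof (exp_pos w). pose proof (Rpower_pos w s).
  assert (P / 64 * (5 / 9) * exp w <= P / 64 * (1 - 16 / 9 * (w / (w + 1) ^ 2)) * exp w).
  { apply Rmult_le_compat_r; [lra|]. apply Rmult_le_compat_l; [|lra]. 
    assert (0 < P) by apply Rpower_pos. lra. }
  nra.
Qed.

Lemma kummer_series_upper c s w L : / 2 <= c -> 0 <= s <= 3 / 2 -> 1 <= w ->
  is_series (fun k => poch_ratio (c + s) c k * (w ^ k / INR (fact k))) L ->
  L <= 192 * Rpower w s * exp w.
Proof.
  intros Hc Hs Hw HL. set (P := Rpower (w + 1) s).
  assert (Hterm : forall k, poch_ratio (c + s) c k * (w ^ k / INR (fact k))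
                   <= 16 * P * (1 + ((INR k + 1) / (w + 1)) ^ 2) * (w ^ k / INR (fact k))).
  { intro k. pose proof (pos_INR k).
    assert (He : 0 <= w ^ k / INR (fact k))
      by (apply Rdiv_le_0_compat; [apply pow_le; lra|apply INR_fact_lt_0]).
    apply Rmult_le_compat_r; [exact He|].
    eapply Rle_trans; [apply poch_ratio_upper; lra|].
    replace (INR k + 1) with ((w + 1) * ((INR k + 1) / (w + 1))) at 1 by (field; lra).
    rewrite <- Rpower_mult_distr by (try apply Rdiv_lt_0_compat; lra). fold P.
    pose proof (Rpower_le_1_plus_sq ((INR k + 1) / (w + 1)) s
      ltac:(apply Rdiv_lt_0_compat; lra) ltac:(lra)).
    assert (0 < P) by apply Rpower_pos. nra. }
  assert (Hsum : is_series
    (fun k => 16 * P * (1 + ((INR k + 1) / (w + 1)) ^ 2) * (w ^ k / INR (fact k)))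
    (16 * P * (1 + (w ^ 2 + 3 * w + 1) / (w + 1) ^ 2) * exp w)).
  { eapply is_series_ext_R; [| |exact (is_series_lincomb _ _ _ _ (16 * P) (16 * P / (w + 1) ^ 2)
      (is_series_exp w) (is_series_exp_S2 w))].
    - intro k. cbv beta. field. split; [apply INR_fact_neq_0|lra].
    - field. lra. }
  pose proof (is_series_le _ _ _ _ Hterm HL Hsum) as Hle.
  assert (Hq : (w ^ 2 + 3 * w + 1) / (w + 1) ^ 2 <= 2) by (apply Rle_div_l; nra).
  assert (HP : P <= 4 * Rpower w s).
  { apply Rle_trans with (Rpower (2 * w) s); [apply Rle_Rpower_l; lra|].
    rewrite <- Rpower_mult_distr by lra. apply Rmult_le_compat_r; [left; apply Rpower_pos|].
    pose proof (Rpower_le_pow 2 s 2 ltac:(lra) ltac:(simpl; lra)). simpl in *. lra. }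
  pose proof (exp_pos w). assert (0 < P) by apply Rpower_pos.
  assert (16 * P * (1 + (w ^ 2 + 3 * w + 1) / (w + 1) ^ 2) * exp w <= 16 * P * 3 * exp w).
  { apply Rmult_le_compat_r; [lra|]. apply Rmult_le_compat_l; lra. }
  nra.
Qed.

Lemma ex_series_poch_ratio_exp c s y : / 2 <= c -> 0 <= s <= 3 / 2 -> 0 <= y ->
  ex_series (fun k => poch_ratio (c + s) c k * (y ^ k / INR (fact k))).
Proof.
  intros Hc Hs Hy. apply (@ex_series_le R_AbsRing R_CompleteNormedModule _
    (fun k => 16 * ((INR k + 1) ^ 2 * (y ^ k / INR (fact k))))).
  - intro k. change (norm ?x) with (Rabs x). pose proof (pos_INR k).
    assert (He : 0 <= y ^ k / INR (fact k))
      by (apply Rdiv_le_0_compat; [apply pow_le; lra|apply INR_fact_lt_0]).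
    pose proof (poch_ratio_pos (c + s) c k ltac:(lra) ltac:(lra)).
    rewrite Rabs_pos_eq by (apply Rmult_le_pos; lra).
    pose proof (poch_ratio_upper c s k Hc Hs).
    pose proof (Rpower_le_pow (INR k + 1) s 2 ltac:(lra) ltac:(simpl; lra)). nra.
  - exists (16 * ((y ^ 2 + 3 * y + 1) * exp y)). exact (is_series_scal_l 16 _ _ (is_series_exp_S2 y)).
Qed.

Lemma kummerM_bounds b c w : / 2 <= c -> b <= 0 -> c - b <= 2 -> 1 <= w ->
  / 120 * Rpower w (- b) <= kummerM b c (- w) <= 192 * Rpower w (- b).
Proof.
  intros Hc Hb Hcb Hw. replace (c - b) with (c + - b) in * by ring.
  destruct (ex_series_poch_ratio_exp c (- b) w Hc ltac:(lra) ltac:(lra)) as [L HL].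
  assert (HM : kummerM b c (- w) = exp (- w) * L).
  { apply is_series_unique, kummer_transformation; [lra| |];
      replace (c - b) with (c + - b) by ring; [|exact HL].
    eapply ex_series_ext_R; [|exists L; exact HL]. intro k.
    rewrite Rabs_pos_eq by (left; apply poch_ratio_pos; lra). rewrite Rabs_pos_eq by lra. reflexivity. }
  pose proof (kummer_series_lower c (- b) w L ltac:(lra) ltac:(lra) Hcb ltac:(lra) HL).
  pose proof (kummer_series_upper c (- b) w L Hc ltac:(lra) Hw HL).
  assert (Hcancel : forall x, exp (- w) * (x * exp w) = x).
  { intro x. rewrite Rmult_comm, Rmult_assoc, <- exp_plus, Rplus_opp_r, exp_0. ring. }
  rewrite HM, <- (Hcancel (/ 120 * Rpower w (- b))), <- (Hcancel (192 * Rpower w (- b))).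
  pose proof (exp_pos (- w)). split; apply Rmult_le_compat_l; lra.
Qed.

(** * Generalized integrals *)

Lemma abs_RInt_le_abs_RInt (f g : R -> R) x y :
  ex_RInt f x y -> ex_RInt g x y ->
  (forall t, Rmin x y <= t <= Rmax x y -> Rabs (f t) <= g t) ->
  Rabs (RInt f x y) <= Rabs (RInt g x y).
Proof.
  assert (Hle : forall x y, x <= y -> ex_RInt f x y -> ex_RInt g x y ->
            (forall t, x <= t <= y -> Rabs (f t) <= g t) -> Rabs (RInt f x y) <= Rabs (RInt g x y)).
  { clear x y. intros x y Hxy Hf Hg Hfg.
    eapply Rle_trans; [apply abs_RInt_le; assumption|].
    eapply Rle_trans; [|apply Rle_abs].
    apply (RInt_le _ _ x y Hxy (ex_RInt_norm f x y Hf) Hg). intros t Ht. apply Hfg. lra. }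
  intros Hf Hg Hfg. destruct (Rle_dec x y) as [Hxy|Hxy].
  - apply Hle; auto. intros t Ht. apply Hfg. rewrite Rmin_left, Rmax_right; lra.
  - rewrite <- (opp_RInt_swap f y x), <- (opp_RInt_swap g y x) by (apply ex_RInt_swap; assumption).
    change (Rabs (- RInt f y x) <= Rabs (- RInt g y x)). rewrite !Rabs_Ropp.
    apply Hle; try (apply ex_RInt_swap; assumption); [lra|].
    intros t Ht. apply Hfg. rewrite Rmin_right, Rmax_left; lra.
Qed.

Section ComparisonTest.

Variables (D : R -> Prop) (f g : R -> R).
Hypothesis D_interval : forall x y t, D x -> D y -> Rmin x y <= t <= Rmax x y -> D t.
Hypothesis f_continuous : forall t, D t -> continuous f t.
Hypothesis g_continuous : forall t, D t -> continuous g t.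
Hypothesis abs_f_le_g : forall t, D t -> Rabs (f t) <= g t.

Lemma ex_RInt_in_interval (h : R -> R) : (forall t, D t -> continuous h t) ->
  forall x y, D x -> D y -> ex_RInt h x y.
Proof.
  intros Hh x y Dx Dy. apply (@ex_RInt_continuous R_CompleteNormedModule).
  intros t Ht. apply Hh, (D_interval x y); assumption.
Qed.

Lemma RInt_diff_le u1 v1 u2 v2 : D u1 -> D v1 -> D u2 -> D v2 ->
  Rabs (RInt f u2 v2 - RInt f u1 v1)
  <= Rabs (RInt g u2 v1 - RInt g u1 v1) + Rabs (RInt g u1 v2 - RInt g u1 v1).
Proof.
  intros Du1 Dv1 Du2 Dv2.
  pose proof (ex_RInt_in_interval f f_continuous) as Hf.
  pose proof (ex_RInt_in_interval g g_continuous) as Hg.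
  assert (Hsplit : RInt f u2 v2 - RInt f u1 v1 = RInt f u2 u1 + RInt f v1 v2).
  { rewrite <- (RInt_Chasles f u2 u1 v2), <- (RInt_Chasles f u1 v1 v2) by auto.
    change (@eq R (RInt f u2 u1 + (RInt f u1 v1 + RInt f v1 v2) - RInt f u1 v1)
            (RInt f u2 u1 + RInt f v1 v2)). lra. }
  assert (Hleft : RInt g u2 u1 = RInt g u2 v1 - RInt g u1 v1).
  { rewrite <- (RInt_Chasles g u2 u1 v1) by auto.
    change (@eq R (RInt g u2 u1) (RInt g u2 u1 + RInt g u1 v1 - RInt g u1 v1)). lra. }
  assert (Hright : RInt g v1 v2 = RInt g u1 v2 - RInt g u1 v1).
  { rewrite <- (RInt_Chasles g u1 v1 v2) by auto.
    change (@eq R (RInt g v1 v2) (RInt g u1 v1 + RInt g v1 v2 - RInt g u1 v1)). lra. }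
  rewrite Hsplit, <- Hleft, <- Hright.
  eapply Rle_trans; [apply Rabs_triang|]. apply Rplus_le_compat.
  - apply abs_RInt_le_abs_RInt; auto. intros t Ht. apply abs_f_le_g, (D_interval u2 u1); auto.
  - apply abs_RInt_le_abs_RInt; auto. intros t Ht. apply abs_f_le_g, (D_interval v1 v2); auto.
Qed.

Lemma ex_RInt_gen_le_compat {Fa Fb : (R -> Prop) -> Prop} {FFa : ProperFilter Fa}
  {FFb : ProperFilter Fb} (lg : R) :
  Fa D -> Fb D -> is_RInt_gen g Fa Fb lg -> ex_RInt_gen f Fa Fb.
Proof.
  intros HDa HDb HI.
  assert (HDD : filter_prod Fa Fb (fun ab : R * R => D (fst ab) /\ D (snd ab)))
    by exact (Filter_prod _ _ _ D D HDa HDb (fun x y Dx Dy => conj Dx Dy)).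
  assert (Hcauchy : exists l : R, filterlim (fun ab : R * R => RInt f (fst ab) (snd ab))
                                    (filter_prod Fa Fb) (locally l)).
  { apply (filterlim_locally_cauchy (U := R_CompleteSpace)). intro eps.
    assert (Heps : 0 < eps / 4) by (destruct eps; simpl; lra).
    pose proof (proj1 (filterlimi_locally _ lg) HI (mkposreal _ Heps)) as Hlim.
    destruct (filter_and _ _ Hlim HDD) as [Q S HQ HS Hnear].
    exists (fun ab : R * R => Q (fst ab) /\ S (snd ab)).
    split; [exact (Filter_prod _ _ _ Q S HQ HS (fun x y Qx Sy => conj Qx Sy))|].
    assert (Hg_near : forall x y, Q x -> S y -> D x /\ D y /\ Rabs (RInt g x y - lg) < eps / 4).
    { intros x y Qx Sy. destruct (Hnear x y Qx Sy) as [[I [HIxy Hball]] [Dx Dy]].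
      rewrite (is_RInt_unique g x y I HIxy). repeat split; assumption. }
    intros [u1 v1] [u2 v2] [Qu1 Sv1] [Qu2 Sv2]. simpl in *.
    destruct (Hg_near u1 v1 Qu1 Sv1) as [Du1 [Dv1 N11]].
    destruct (Hg_near u2 v2 Qu2 Sv2) as [Du2 [Dv2 _]].
    destruct (Hg_near u2 v1 Qu2 Sv1) as [_ [_ N21]].
    destruct (Hg_near u1 v2 Qu1 Sv2) as [_ [_ N12]].
    change (Rabs (RInt f u2 v2 - RInt f u1 v1) < eps).
    eapply Rle_lt_trans; [apply RInt_diff_le; assumption|].
    assert (Htri : forall p q r : R, Rabs (p - q) <= Rabs (p - r) + Rabs (q - r)).
    { intros p q r. replace (p - q) with ((p - r) + - (q - r)) by ring.
      rewrite <- (Rabs_Ropp (q - r)). apply Rabs_triang. }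
    pose proof (Htri (RInt g u2 v1) (RInt g u1 v1) lg).
    pose proof (Htri (RInt g u1 v2) (RInt g u1 v1) lg). lra. }
  destruct Hcauchy as [l Hl]. exists l.
  apply (filterlimi_lim_ext_loc (fun ab : R * R => RInt f (fst ab) (snd ab))); [|exact Hl].
  refine (filter_imp _ _ _ HDD). intros [x y] [Dx Dy]. simpl.
  apply (@RInt_correct R_CompleteNormedModule), ex_RInt_in_interval; assumption.
Qed.

End ComparisonTest.

Lemma is_RInt_gen_le {Fa Fb : (R -> Prop) -> Prop} {FFa : ProperFilter Fa}
  {FFb : ProperFilter Fb} (f g : R -> R) (lf lg : R) :
  filter_prod Fa Fb (fun ab : R * R => fst ab <= snd ab /\
                       forall t, fst ab <= t <= snd ab -> 0 <= f t <= g t) ->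
  is_RInt_gen f Fa Fb lf -> is_RInt_gen g Fa Fb lg -> lf <= lg.
Proof.
  intros H Hf Hg. eapply Rle_trans; [apply Rle_abs|].
  apply (@RInt_gen_norm R_CompleteNormedModule Fa Fb _ _ f g lf lg); [| |exact Hf|exact Hg];
    refine (filter_imp _ _ _ H).
  - intros ab [Hab _]. exact Hab.
  - intros ab [_ Hfg] t Ht. change (Rabs (f t) <= g t).
    destruct (Hfg t Ht). rewrite Rabs_pos_eq; lra.
Qed.

Lemma is_RInt_gen_ge_0 {Fa Fb : (R -> Prop) -> Prop} {FFa : ProperFilter Fa}
  {FFb : ProperFilter Fb} (g : R -> R) (lg : R) :
  filter_prod Fa Fb (fun ab : R * R => fst ab <= snd ab /\
                       forall t, fst ab <= t <= snd ab -> 0 <= g t) ->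
  is_RInt_gen g Fa Fb lg -> 0 <= lg.
Proof.
  intros H Hg. apply (@is_RInt_gen_le Fa Fb _ _ (fun _ => 0) g 0 lg); [| |exact Hg].
  - refine (filter_imp _ _ _ H). intros ab [Hab Hpos].
    split; [exact Hab|]. intros t Ht. split; [lra|auto].
  - pose proof (@is_RInt_gen_scal _ Fa Fb _ _ g 0 lg Hg) as H0. change (scal 0 lg) with (0 * lg) in H0.
    rewrite Rmult_0_l in H0.
    exact (is_RInt_gen_ext _ _ _ (filter_forall _ (fun ab t _ => Rmult_0_l (g t))) H0).
Qed.

Lemma is_RInt_gen_antiderivative (F f : R -> R) {Fa Fb : (R -> Prop) -> Prop}
  {FFa : Filter Fa} {FFb : Filter Fb} la lb :
  Fa (fun x => 0 < x) -> Fb (fun x => 0 < x) ->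
  (forall x, 0 < x -> is_derive F x (f x)) -> (forall x, 0 < x -> continuous f x) ->
  filterlim F Fa (locally la) -> filterlim F Fb (locally lb) ->
  is_RInt_gen f Fa Fb (lb - la).
Proof.
  intros Ha Hb Hd Hc Hla Hlb.
  assert (Hpos : filter_prod Fa Fb (fun ab : R * R =>
            forall x, Rmin (fst ab) (snd ab) <= x <= Rmax (fst ab) (snd ab) -> 0 < x)).
  { apply (Filter_prod _ _ _ _ _ Ha Hb). intros x y Hx Hy t Ht. simpl in Ht.
    assert (0 < Rmin x y) by (apply Rmin_glb_lt; auto). lra. }
  apply (is_RInt_gen_ext (Derive F)).
  { refine (filter_imp _ _ _ Hpos). intros ab H t Ht. apply is_derive_unique, Hd, H. lra. }
  apply is_RInt_gen_Derive; [| |exact Hla|exact Hlb]; refine (filter_imp _ _ _ Hpos); intros ab H t Ht.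
  - eexists. apply Hd, H, Ht.
  - apply (continuous_ext_loc _ f); [|apply Hc, H, Ht].
    assert (Ht0 : 0 < t) by (apply H, Ht).
    exists (mkposreal t Ht0). intros z Hz. symmetry. apply is_derive_unique, Hd.
    change (Rabs (z - t) < t) in Hz. apply Rabs_def2 in Hz. lra.
Qed.

Lemma Rpower_lim_0 p : 0 < p -> filterlim (fun t => Rpower t p) (at_right 0) (locally 0).
Proof.
  intro Hp. apply (filterlim_comp _ _ _ (fun t => p * ln t) exp _ (Rbar_locally m_infty));
    [|exact is_lim_exp_m].
  eapply filterlim_comp; [exact is_lim_ln_0|].
  pose proof (is_lim_scal_l (fun x => x) p m_infty m_infty (is_lim_id m_infty)) as H.
  simpl in H. destruct (Rle_dec 0 p) as [Hp'|]; [|exfalso; lra].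
  destruct (Rle_lt_or_eq_dec 0 p Hp'); [exact H|exfalso; lra].
Qed.

Lemma Rpower_continuous q x : 0 < x -> continuous (fun t => Rpower t q) x.
Proof.
  intro Hx. apply (ex_derive_continuous (K := R_AbsRing) (V := R_NormedModule)).
  exists (q * Rpower x (q - 1)). apply is_derive_Reals, derivable_pt_lim_power, Hx.
Qed.

Lemma is_RInt_gen_Rpower_0 K p b : 0 < p -> 0 < b ->
  is_RInt_gen (fun t => K * Rpower t (p - 1)) (at_right 0) (at_point b) (K / p * Rpower b p).
Proof.
  intros Hp Hb. replace (K / p * Rpower b p) with (K / p * Rpower b p - K / p * 0) by ring.
  refine (is_RInt_gen_antiderivative (fun t => K / p * Rpower t p) _ _ _ _ _ _ _ _ _).
  - exists (mkposreal 1 Rlt_0_1). intros y _ Hy. exact Hy.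
  - exact Hb.
  - intros x Hx. replace (K * Rpower x (p - 1)) with (K / p * (p * Rpower x (p - 1))) by (field; lra).
    apply (is_derive_scal (fun t => Rpower t p)), is_derive_Reals, derivable_pt_lim_power, Hx.
  - intros x Hx. apply (continuous_scal_r K (fun t => Rpower t (p - 1))), Rpower_continuous, Hx.
  - exact (filterlim_comp _ _ _ _ _ _ _ _ (Rpower_lim_0 p Hp) (filterlim_scal_r (K / p) 0)).
  - intros P HP. exact (locally_singleton _ _ HP).
Qed.

Lemma is_RInt_gen_exp_tail K c b : 0 < c -> 0 < b ->
  is_RInt_gen (fun t => K * exp (- c * t)) (at_point b) (Rbar_locally p_infty) (K / c * exp (- c * b)).
Proof.
  intros Hc Hb. replace (K / c * exp (- c * b)) with (0 - (- (K / c)) * exp (- c * b)) by ring.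
  refine (is_RInt_gen_antiderivative (fun t => - (K / c) * exp (- c * t)) _ _ _ _ _ _ _ _ _).
  - exact Hb.
  - exists 0. intros x Hx. exact Hx.
  - intros x Hx. auto_derive; [exact I|]. field. lra.
  - intros x Hx. apply (ex_derive_continuous (K := R_AbsRing) (V := R_NormedModule)).
    auto_derive. exact I.
  - intros P HP. exact (locally_singleton _ _ HP).
  - assert (H : is_lim (fun t => - (K / c) * exp (- c * t)) p_infty (Rbar_mult (- (K / c)) 0)).
    { apply is_lim_scal_l, (is_lim_comp exp (fun t => - c * t) p_infty 0 m_infty is_lim_exp_m).
      - replace m_infty with (Rbar_mult (- c) p_infty); [apply is_lim_scal_l, is_lim_id|].
        simpl. destruct (Rle_dec 0 (- c)); [exfalso; lra|reflexivity].
      - exists 0. intros x _. discriminate. }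
    simpl in H. rewrite Rmult_0_r in H. exact H.
Qed.

Lemma filter_prod_at_right_at_point b (P : R -> Prop) : 0 < b -> (forall t, 0 < t <= b -> P t) ->
  filter_prod (at_right 0) (at_point b)
    (fun ab : R * R => fst ab <= snd ab /\ forall t, fst ab <= t <= snd ab -> P t).
Proof.
  intros Hb HP. apply (Filter_prod _ _ _ (fun x => 0 < x <= b) (fun y => y = b)).
  - exists (mkposreal b Hb). intros y Hy Hy0. change (Rabs (y - 0) < b) in Hy.
    rewrite Rminus_0_r, Rabs_right in Hy; lra.
  - reflexivity.
  - intros x y Hx ->. simpl. split; [lra|]. intros t Ht. apply HP. lra.
Qed.

Lemma filter_prod_at_point_p_infty b (P : R -> Prop) : (forall t, b <= t -> P t) ->
  filter_prod (at_point b) (Rbar_locally p_infty)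
    (fun ab : R * R => fst ab <= snd ab /\ forall t, fst ab <= t <= snd ab -> P t).
Proof.
  intro HP. apply (Filter_prod _ _ _ (fun x => x = b) (fun y => b <= y)).
  - reflexivity.
  - exists b. intros y Hy. lra.
  - intros x y -> Hy. simpl. split; [exact Hy|]. intros t Ht. apply HP. lra.
Qed.

(** * The Tricomi integral *)

Definition tricomi_integrand (w a c t : R) : R :=
  exp (- w * t) * Rpower t (a - 1) * Rpower (1 + t) c.

Lemma tricomi_integrand_continuous w a c x : 0 < x -> continuous (tricomi_integrand w a c) x.
Proof.
  intro Hx. apply (ex_derive_continuous (K := R_AbsRing) (V := R_NormedModule)).
  unfold tricomi_integrand, Rpower. auto_derive. lra.
Qed.

Lemma tricomi_integrand_pos w a c t : 0 < tricomi_integrand w a c t.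
Proof.
  unfold tricomi_integrand.
  apply Rmult_lt_0_compat; [apply Rmult_lt_0_compat|]; apply exp_pos || apply Rpower_pos.
Qed.

Lemma tricomi_integrand_head_bounds w a c t : 0 < t <= 1 -> 0 <= w -> w * t <= 1 -> -4 <= c <= 0 ->
  / 48 * Rpower t (a - 1) <= tricomi_integrand w a c t <= Rpower t (a - 1).
Proof.
  intros Ht Hw Hwt Hc. unfold tricomi_integrand. pose proof (Rpower_pos t (a - 1)).
  assert (He : / 3 <= exp (- w * t) <= 1).
  { split; [|rewrite <- exp_0; apply exp_le_compat; nra].
    assert (Hinv : exp 1 * exp (- 1) = 1) by (rewrite <- exp_plus, Rplus_opp_r; apply exp_0).
    assert (exp (- 1) <= exp (- w * t)) by (apply exp_le_compat; lra).
    pose proof exp_le_3. pose proof (exp_pos (- 1)). nra. }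
  assert (Hp : / 16 <= Rpower (1 + t) c <= 1).
  { split; [|apply Rpower_le_1; lra].
    replace c with (- - c) by ring. rewrite Rpower_Ropp. apply Rinv_le_contravar; [apply Rpower_pos|].
    pose proof (Rpower_le_pow (1 + t) (- c) 4 ltac:(lra) ltac:(simpl; lra)).
    assert ((1 + t) ^ 4 <= 2 ^ 4) by (apply pow_incr; lra). simpl in *. lra. }
  assert (/ 48 <= exp (- w * t) * Rpower (1 + t) c <= 1) by (split; nra).
  replace (exp (- w * t) * Rpower t (a - 1) * Rpower (1 + t) c)
    with (Rpower t (a - 1) * (exp (- w * t) * Rpower (1 + t) c)) by ring.
  split; nra.
Qed.

(* Beyond [t = 1/w]: [t^(a-1) = w^(1-a) (w t)^(a-1) <= w^(1-a) w t] and [w t <= 2 e^(w t / 2)]. *)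
Lemma tricomi_integrand_tail_le w a c t : 0 < w -> a <= 2 -> c <= 0 -> 1 <= w * t ->
  tricomi_integrand w a c t <= 2 * Rpower w (1 - a) * exp (- (w / 2) * t).
Proof.
  intros Hw Ha Hc Hwt. assert (Ht : 0 < t) by nra. unfold tricomi_integrand.
  assert (Hsplit : Rpower t (a - 1) = Rpower w (1 - a) * Rpower (w * t) (a - 1)).
  { rewrite <- Rpower_mult_distr, <- Rmult_assoc, <- Rpower_plus by lra.
    replace (1 - a + (a - 1)) with 0 by ring. rewrite Rpower_O by lra. ring. }
  assert (Hpow : Rpower (w * t) (a - 1) <= 2 * exp (w * t / 2)).
  { pose proof (exp_ineq1_le (w * t / 2)).
    assert (Rpower (w * t) (a - 1) <= Rpower (w * t) 1) by (apply Rle_Rpower; lra).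
    rewrite Rpower_1 in * by lra. lra. }
  assert (Hexp : exp (- w * t) * exp (w * t / 2) = exp (- (w / 2) * t)).
  { rewrite <- exp_plus. f_equal. field. }
  pose proof (Rpower_le_1 (1 + t) c ltac:(lra) Hc).
  pose proof (exp_pos (- w * t)). pose proof (Rpower_pos (1 + t) c). pose proof (Rpower_pos w (1 - a)).
  pose proof (Rpower_pos (w * t) (a - 1)).
  rewrite Hsplit, <- Hexp.
  apply Rle_trans with (exp (- w * t) * (Rpower w (1 - a) * Rpower (w * t) (a - 1))).
  - rewrite <- (Rmult_1_r (exp (- w * t) * _)) at 2. apply Rmult_le_compat_l; [|lra].
    apply Rmult_le_pos; [lra|]. apply Rmult_le_pos; lra.
  - replace (2 * Rpower w (1 - a) * (exp (- w * t) * exp (w * t / 2)))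
      with (exp (- w * t) * (Rpower w (1 - a) * (2 * exp (w * t / 2)))) by ring.
    apply Rmult_le_compat_l; [lra|]. apply Rmult_le_compat_l; lra.
Qed.

Lemma tricomi_integral_head w a c : 1 <= w -> / 2 <= a <= 2 -> -4 <= c <= 0 ->
  exists I, is_RInt_gen (tricomi_integrand w a c) (at_right 0) (at_point (/ w)) I /\
    / 96 * Rpower w (- a) <= I <= 2 * Rpower w (- a).
Proof.
  intros Hw Ha Hc.
  assert (Hb : 0 < / w <= 1).
  { split; [apply Rinv_0_lt_compat; lra|rewrite <- Rinv_1; apply Rinv_le_contravar; lra]. }
  assert (Hbounds : forall t, 0 < t <= / w ->
            / 48 * Rpower t (a - 1) <= tricomi_integrand w a c t <= 1 * Rpower t (a - 1)).
  { intros t Ht. rewrite Rmult_1_l. apply tricomi_integrand_head_bounds; try lra.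
    apply Rmult_le_reg_l with (/ w); [lra|]. rewrite <- Rmult_assoc, Rinv_l by lra. lra. }
  pose proof (is_RInt_gen_Rpower_0 1 a (/ w) ltac:(lra) ltac:(lra)) as Hup.
  pose proof (is_RInt_gen_Rpower_0 (/ 48) a (/ w) ltac:(lra) ltac:(lra)) as Hlow.
  rewrite Rpower_Rinv_l in Hup, Hlow by lra.
  assert (Hex : ex_RInt_gen (tricomi_integrand w a c) (at_right 0) (at_point (/ w))).
  { refine (ex_RInt_gen_le_compat (fun t => 0 < t <= / w) _ (fun t => 1 * Rpower t (a - 1))
      _ _ _ _ _ _ _ Hup).
    - intros x y t Hx Hy Ht. split.
      + apply Rlt_le_trans with (Rmin x y); [apply Rmin_glb_lt; lra|lra].
      + apply Rle_trans with (Rmax x y); [lra|apply Rmax_lub; lra].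
    - intros t Ht. apply tricomi_integrand_continuous. lra.
    - intros t Ht. apply (continuous_scal_r 1 (fun t => Rpower t (a - 1))), Rpower_continuous. lra.
    - intros t Ht. pose proof (tricomi_integrand_pos w a c t). rewrite Rabs_pos_eq by lra.
      apply Hbounds, Ht.
    - exists (mkposreal (/ w) (proj1 Hb)). intros y Hy Hy0. change (Rabs (y - 0) < / w) in Hy.
      rewrite Rminus_0_r, Rabs_right in Hy; simpl; lra.
    - change (0 < / w <= / w). lra. }
  destruct Hex as [I HI].
  exists I. split; [exact HI|]. pose proof (Rpower_pos w (- a)). split.
  - apply Rle_trans with (/ 48 / a * Rpower w (- a)).
    + apply Rmult_le_compat_r; [lra|].
      assert (/ 2 <= / a) by (apply Rinv_le_contravar; lra). unfold Rdiv. lra.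
    + refine (is_RInt_gen_le _ _ _ _ _ Hlow HI).
      apply filter_prod_at_right_at_point; [lra|]. intros t Ht.
      pose proof (Rpower_pos t (a - 1)). pose proof (Hbounds t Ht). lra.
  - apply Rle_trans with (1 / a * Rpower w (- a)).
    + refine (is_RInt_gen_le _ _ _ _ _ HI Hup).
      apply filter_prod_at_right_at_point; [lra|]. intros t Ht.
      pose proof (tricomi_integrand_pos w a c t). pose proof (Hbounds t Ht). lra.
    + apply Rmult_le_compat_r; [lra|]. apply Rle_div_l; lra.
Qed.

Lemma tricomi_integral_tail w a c : 1 <= w -> / 2 <= a <= 2 -> c <= 0 ->
  exists I, is_RInt_gen (tricomi_integrand w a c) (at_point (/ w)) (Rbar_locally p_infty) I /\
    0 <= I <= 4 * Rpower w (- a).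
Proof.
  intros Hw Ha Hc. set (K := 2 * Rpower w (1 - a)).
  assert (Hb : 0 < / w) by (apply Rinv_0_lt_compat; lra).
  assert (Hbounds : forall t, / w <= t -> tricomi_integrand w a c t <= K * exp (- (w / 2) * t)).
  { intros t Ht. apply tricomi_integrand_tail_le; try lra.
    apply Rmult_le_reg_l with (/ w); [lra|]. rewrite <- Rmult_assoc, Rinv_l by lra. lra. }
  pose proof (is_RInt_gen_exp_tail K (w / 2) (/ w) ltac:(lra) Hb) as Hup.
  assert (Hex : ex_RInt_gen (tricomi_integrand w a c) (at_point (/ w)) (Rbar_locally p_infty)).
  { refine (ex_RInt_gen_le_compat (fun t => / w <= t) _ (fun t => K * exp (- (w / 2) * t))
      _ _ _ _ _ _ _ Hup).
    - intros x y t Hx Hy Ht. apply Rle_trans with (Rmin x y); [apply Rmin_glb|]; lra.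
    - intros t Ht. apply tricomi_integrand_continuous. lra.
    - intros t _. apply (ex_derive_continuous (K := R_AbsRing) (V := R_NormedModule)).
      auto_derive. exact I.
    - intros t Ht. pose proof (tricomi_integrand_pos w a c t). rewrite Rabs_pos_eq by lra.
      apply Hbounds, Ht.
    - apply Rle_refl.
    - exists (/ w). intros t Ht. lra. }
  destruct Hex as [I HI].
  exists I. split; [exact HI|]. split.
  - refine (is_RInt_gen_ge_0 _ _ _ HI). apply filter_prod_at_point_p_infty. intros t _.
    pose proof (tricomi_integrand_pos w a c t). lra.
  - apply Rle_trans with (K / (w / 2) * exp (- (w / 2) * / w)).
    + refine (is_RInt_gen_le _ _ _ _ _ HI Hup). apply filter_prod_at_point_p_infty. intros t Ht.
      pose proof (tricomi_integrand_pos w a c t). pose proof (Hbounds t Ht). lra.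
    + assert (HK : K / (w / 2) = 4 * Rpower w (- a)).
      { unfold K. replace (1 - a) with (1 + - a) by ring. rewrite Rpower_plus, Rpower_1 by lra.
        field. lra. }
      assert (exp (- (w / 2) * / w) <= 1).
      { rewrite <- exp_0. apply exp_le_compat.
        replace (- (w / 2) * / w) with (- / 2) by (field; lra). lra. }
      pose proof (Rpower_pos w (- a)). rewrite HK. nra.
Qed.

Lemma tricomi_integral_bounds w a c : 1 <= w -> / 2 <= a <= 2 -> -4 <= c <= 0 ->
  exists I, is_RInt_gen (tricomi_integrand w a c) (at_right 0) (Rbar_locally p_infty) I /\
    / 96 * Rpower w (- a) <= I <= 6 * Rpower w (- a).
Proof.
  intros Hw Ha Hc.
  destruct (tricomi_integral_head w a c Hw Ha Hc) as [I1 [H1 B1]].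
  destruct (tricomi_integral_tail w a c Hw Ha ltac:(lra)) as [I2 [H2 B2]].
  exists (I1 + I2). split; [exact (is_RInt_gen_Chasles _ (/ w) I1 I2 H1 H2)|lra].
Qed.

Lemma Gamma_bounds a : / 2 <= a <= 2 -> / 96 <= Gamma a <= 6.
Proof.
  intro Ha. destruct (tricomi_integral_bounds 1 a 0 ltac:(lra) Ha ltac:(lra)) as [I [HI Hb]].
  rewrite Rpower_1_l in Hb. replace (Gamma a) with I; [lra|].
  symmetry. apply is_RInt_gen_unique. refine (is_RInt_gen_ext _ _ _ _ HI).
  apply filter_forall. intros ab t _.
  change (exp (- 1 * t) * Rpower t (a - 1) * Rpower (1 + t) 0 = exp (- t) * Rpower t (a - 1) :> R).
  replace (Rpower (1 + t) 0) with 1 by (unfold Rpower; rewrite Rmult_0_l, exp_0; reflexivity).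
  replace (- 1 * t) with (- t) by ring. ring.
Qed.

Lemma tricomiT_bounds b c w : / 2 <= c -> b <= 0 -> c - b <= 2 -> 1 <= w ->
  / 576 * exp (- w) * Rpower w (b - c) <= tricomiT b c (- w) <= 576 * exp (- w) * Rpower w (b - c).
Proof.
  intros Hc Hb Hcb Hw.
  destruct (tricomi_integral_bounds w (c - b) (b - 1) Hw ltac:(lra) ltac:(lra)) as [I [HI HIb]].
  pose proof (Gamma_bounds (c - b) ltac:(lra)) as HG.
  replace (- (c - b)) with (b - c) in HIb by ring.
  assert (HT : tricomiT b c (- w) = exp (- w) * (I / Gamma (c - b))).
  { unfold tricomiT. replace (RInt_gen _ _ _) with I by (symmetry; exact (is_RInt_gen_unique _ I HI)).
    unfold Rdiv. ring. }
  pose proof (exp_pos (- w)). pose proof (Rpower_pos w (b - c)).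
  assert (Hratio : / 576 * Rpower w (b - c) <= I / Gamma (c - b) <= 576 * Rpower w (b - c)).
  { split; [apply (Rle_div_r (/ 576 * Rpower w (b - c)))|apply (Rle_div_l I)]; try lra.
    - apply Rle_trans with (/ 576 * Rpower w (b - c) * 6); [apply Rmult_le_compat_l|]; lra.
    - apply Rle_trans with (576 * Rpower w (b - c) * / 96); [lra|apply Rmult_le_compat_l]; lra. }
  rewrite HT. split; nra.
Qed.

Theorem corollary4p10 :
  forall n : nat, (2 <= n)%nat ->
  exists C : R, 0 < C /\
  forall (j : nat) (lam : R), (1 <= j)%nat ->
    lam >= (INR n - 1) * INR j / 2 ->
    let alpha := 1 - 1 / INR n in
    let beta := / 2 * (1 - 1 / INR n) - lam / (INR j * INR n) in
    alpha - beta - 1 <= 1 ->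
    forall z : R, 1 <= z ->
      let w := INR j * z ^ n in
      let G := exp (w / 2) * kummerM beta alpha (- w) in
      let D := exp (w / 2) * tricomiT beta alpha (- w) in
      / C * exp (- w / 2) * Rpower w (beta - alpha) <= D /\
      D <= C * exp (- w / 2) * Rpower w (beta - alpha) /\
      / C * exp (w / 2) * Rpower w (- beta) <= G /\
      G <= C * exp (w / 2) * Rpower w (- beta).
Proof.
  intros n Hn. exists 1000. split; [lra|].
  intros j lam Hj Hlam alpha beta Hab z Hz w G D.
  assert (Hn2 : 2 <= INR n) by (apply (le_INR 2), Hn).
  assert (Hj1 : 1 <= INR j) by (apply (le_INR 1), Hj).
  assert (Halpha : / 2 <= alpha).
  { unfold alpha. assert (1 / INR n <= / 2) by (apply Rle_div_l; lra). lra. }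
  assert (Hbeta : beta <= 0).
  { unfold beta. apply Rle_minus, (Rle_div_r _ lam (INR j * INR n)); [apply Rmult_lt_0_compat; lra|].
    replace (/ 2 * (1 - 1 / INR n) * (INR j * INR n)) with ((INR n - 1) * INR j / 2) by (field; lra).
    lra. }
  assert (Hw : 1 <= w) by (unfold w; pose proof (pow_R1_Rle z n Hz); nra).
  pose proof (kummerM_bounds beta alpha w Halpha Hbeta ltac:(lra) Hw) as HM.
  pose proof (tricomiT_bounds beta alpha w Halpha Hbeta ltac:(lra) Hw) as HT.
  assert (Hhalf : exp (w / 2) * exp (- w) = exp (- w / 2)) by (rewrite <- exp_plus; f_equal; field).
  pose proof (exp_pos (w / 2)). pose proof (exp_pos (- w)).
  pose proof (Rpower_pos w (beta - alpha)). pose proof (Rpower_pos w (- beta)).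
  unfold G, D. rewrite <- Hhalf. repeat split; nra.
Qed.
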